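(* Let $A$ and $B$ be two $n\times n\times n$ alternating sign hypermatrices. Then $L(A)=L(B)$ if and only if $A-B$ can be expressed as a sum of pairs of T-blocks, where the two T-blocks in each pair have opposite depth and occupy the same vertical lines.
   Context: An $n\times n\times n$ hypermatrix $A=[a_{ijk}]$ has row lines $A_{*jk}=[a_{ijk}: i=1,\dots,n]$, column lines $A_{i*k}=[a_{ijk}: j=1,\dots,n]$ and vertical lines $A_{ij*}=[a_{ijk}: k=1,\dots,n]$. An alternating sign hypermatrix (ASHM) is an $n\times n\times n$ hypermatrix with entries in $\{0,1,-1\}$ such that in every row line, column line and vertical line the non-zero entries alternate in sign, starting and ending with $+1$. The $k$-th plane of $A$ is $P_k(A)=[a_{ijk}]_{i,j=1}^n$, and $L(A)=\sum_{k=1}^n k\,P_k(A)$. For indices $i_1<i_2$, $j_1<j_2$, $k_1<k_2$, the hypermatrix $T_{i_1,j_1,k_1:\,i_2,j_2,k_2}=[t_{ijk}]$ has $t_{ijk}=1$ for $(i,j,k)\in\{(i_1,j_1,k_1),(i_2,j_2,k_1),(i_2,j_1,k_2),(i_1,j_2,k_2)\}$, $t_{ijk}=-1$ for $(i,j,k)\in\{(i_2,j_1,k_1),(i_1,j_2,k_1),(i_1,j_1,k_2),(i_2,j_2,k_2)\}$, and $0$ otherwise. A T-block is a hypermatrix $T=\pm T_{i_1,j_1,k_1:\,i_2,j_2,k_2}$; its depth is $d(T)=k_2-k_1$ if $T=T_{i_1,j_1,k_1:\,i_2,j_2,k_2}$ and $d(T)=k_1-k_2$ if $T=-T_{i_1,j_1,k_1:\,i_2,j_2,k_2}$.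 Two T-blocks $T_1,T_2$ have opposite depth if $d(T_1)=-d(T_2)$. A T-block $\pm T_{i_1,j_1,k_1:\,i_2,j_2,k_2}$ occupies the vertical lines at positions $(i_1,j_1),(i_1,j_2),(i_2,j_1),(i_2,j_2)$. *)

From mathcomp Require Import all_boot all_order all_algebra.
Set Implicit Arguments. Unset Strict Implicit. Unset Printing Implicit Defensive.
Import GRing.Theory Num.Theory.
Local Open Scope ring_scope.

(* An n x n x n hypermatrix with integer entries; indices are 'I_n
   (0-based: paper index i corresponds to ordinal i-1). *)
Definition hmx (n : nat) := 'I_n -> 'I_n -> 'I_n -> int.

Definition alt_sign_line (s : seq int) : bool :=
  let t := [seq x <- s | x != 0] in
  [&& t == mkseq (fun m => (-1) ^+ m) (size t) & odd (size t)].

Definition row_line n (A : hmx n) (j k : 'I_n) : seq int := [seq A i j k | i <- enum 'I_n].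
Definition col_line n (A : hmx n) (i k : 'I_n) : seq int := [seq A i j k | j <- enum 'I_n].
Definition vert_line n (A : hmx n) (i j : 'I_n) : seq int := [seq A i j k | k <- enum 'I_n].

Definition is_ASHM n (A : hmx n) : Prop :=
  (forall i j k, A i j k \in [:: 0; 1; -1]) /\
  (forall j k, alt_sign_line (row_line A j k)) /\
  (forall i k, alt_sign_line (col_line A i k)) /\
  (forall i j, alt_sign_line (vert_line A i j)).

(* L(A) = sum_k k P_k(A), paper index k = ordinal k + 1. *)
Definition Lmx n (A : hmx n) (i j : 'I_n) : int :=
  \sum_(k < n) (k.+1)%:Z * A i j k.

Definition Tbase n (i1 j1 k1 i2 j2 k2 : 'I_n) : hmx n := fun i j k =>
  if (i, j, k) \in [:: (i1, j1, k1); (i2, j2, k1); (i2, j1, k2); (i1, j2, k2)] then 1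
  else if (i, j, k) \in [:: (i2, j1, k1); (i1, j2, k1); (i1, j1, k2); (i2, j2, k2)] then -1
  else 0.

(* Data of a (candidate) T-block: tsign = true means +T_{..}, false means -T_{..}. *)
Record tblock (n : nat) := TBlock {
  tsign : bool;
  ti1 : 'I_n; tj1 : 'I_n; tk1 : 'I_n;
  ti2 : 'I_n; tj2 : 'I_n; tk2 : 'I_n }.

Definition tblock_valid n (T : tblock n) : bool :=
  [&& ti1 T < ti2 T, tj1 T < tj2 T & tk1 T < tk2 T]%N.

Definition tmx n (T : tblock n) : hmx n := fun i j k =>
  (if tsign T then 1 else -1) *
  Tbase (ti1 T) (tj1 T) (tk1 T) (ti2 T) (tj2 T) (tk2 T) i j k.

Definition depth n (T : tblock n) : int :=
  if tsign T then (tk2 T)%:Z - (tk1 T)%:Z else (tk1 T)%:Z - (tk2 T)%:Z.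

Definition opposite_depth n (T1 T2 : tblock n) : bool := depth T1 == - depth T2.

Definition occupies n (T : tblock n) : {set 'I_n * 'I_n} :=
  [set (ti1 T, tj1 T); (ti1 T, tj2 T); (ti2 T, tj1 T); (ti2 T, tj2 T)].

Definition good_pair n (p : tblock n * tblock n) : bool :=
  [&& tblock_valid p.1, tblock_valid p.2, opposite_depth p.1 p.2
    & occupies p.1 == occupies p.2].

From mathcomp Require Import all_boot all_order all_algebra.
From mathcomp Require Import zify ring.
Set Implicit Arguments. Unset Strict Implicit. Unset Printing Implicit Defensive.
Import GRing.Theory Num.Theory.
Local Open Scope ring_scope.

(* A valid T-block T on the vertical lines {i1,i2} x {j1,j2} satisfies
   L(T) = - d(T) (e_i1 - e_i2) (e_j1 - e_j2)^T, so the two blocks of a pair of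
   opposite depth on the same lines cancel in L.
   Conversely, all lines of an ASHM sum to 1, so D = A - B has zero line sums,
   and L(A) = L(B) adds that every vertical line of D has zero first moment.
   Such a D expands (0-based indices, pivot n-1) as
     D = sum_(i,j,m) D_ijm (e_i - e_(n-1)) (x) (e_j - e_(n-1)) (x) w_m,
   with w_m = e_m - m e_1 + (m - 1) e_0, and w_(m+1) - w_m =
   (e_0 - e_m) - (e_1 - e_(m+1)) is the vertical profile of the pair
   T_(i,j,0 : n-1,n-1,m), -T_(i,j,1 : n-1,n-1,m+1) of depths m and -m. *)

Definition ind (b : bool) : int := if b then 1 else 0.

Definition sdelta (T : eqType) (x a b : T) : int := ind (x == a) - ind (x == b).

Lemma sdelta_id (T : eqType) (x a : T) : sdelta x a a = 0.
Proof. exact: subrr. Qed.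

Lemma sum_mul_ind (I : finType) (f : I -> int) (a : I) :
  \sum_i f i * ind (i == a) = f a.
Proof.
by rewrite (bigD1 a) //= eqxx mulr1 big1 ?addr0 // => i /negbTE->; rewrite mulr0.
Qed.

Lemma sum_mul_sdelta (I : finType) (f : I -> int) (a b : I) :
  \sum_i f i * sdelta i a b = f a - f b.
Proof. by under eq_bigr do rewrite mulrBr; rewrite sumrB !sum_mul_ind. Qed.

Lemma sum_mul_sdelta_pivot (I : finType) (f : I -> int) (x r : I) :
  \sum_i f i * sdelta x i r = f x - ind (x == r) * \sum_i f i.
Proof.
under eq_bigr do rewrite mulrBr (eq_sym x) [f _ * ind (x == r)]mulrC.
by rewrite sumrB sum_mul_ind -mulr_sumr.
Qed.

Lemma Tbase_sdelta n (i1 j1 k1 i2 j2 k2 a b c : 'I_n) :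
  i1 != i2 -> j1 != j2 -> k1 != k2 ->
  Tbase i1 j1 k1 i2 j2 k2 a b c = sdelta a i1 i2 * sdelta b j1 j2 * sdelta c k1 k2.
Proof.
move=> ni nj nk; rewrite /Tbase /sdelta !inE !xpair_eqE.
have not_both (T : eqType) (x y z : T) : y != z -> ~~ ((x == y) && (x == z)).
  by move=> nyz; apply: contra nyz => /andP[/eqP <- /eqP <-].
move: (not_both _ a _ _ ni) (not_both _ b _ _ nj) (not_both _ c _ _ nk).
move: (a == i1) (a == i2) (b == j1) (b == j2) (c == k1) (c == k2).
by do 6 case.
Qed.

Lemma tmx_sdelta n (T : tblock n) a b c : tblock_valid T ->
  tmx T a b c = (if tsign T then 1 else -1) *
    (sdelta a (ti1 T) (ti2 T) * sdelta b (tj1 T) (tj2 T) * sdelta c (tk1 T) (tk2 T)).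
Proof. by case/and3P=> *; rewrite /tmx Tbase_sdelta // -val_eqE /= ltn_eqF. Qed.

Lemma Lmx_tmx n (T : tblock n) i j : tblock_valid T ->
  Lmx (tmx T) i j = - depth T * (sdelta i (ti1 T) (ti2 T) * sdelta j (tj1 T) (tj2 T)).
Proof.
move=> vT; pose s : int := if tsign T then 1 else -1; set E := sdelta i _ _ * _.
rewrite /Lmx (eq_bigr (fun k : 'I_n => ((k.+1)%:Z * (s * E)) * sdelta k (tk1 T) (tk2 T))).
  by rewrite sum_mul_sdelta /depth /s; case: (tsign T); rewrite !intS; ring.
by move=> k _; rewrite tmx_sdelta // -/s -/E; ring.
Qed.

Lemma occupies_coords n (T : tblock n) x y : (x, y) \in occupies T ->
  (x \in [:: ti1 T; ti2 T]) && (y \in [:: tj1 T; tj2 T]).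
Proof. by rewrite !inE -!orbA => /or4P[] /eqP[-> ->]; rewrite !eqxx ?orbT. Qed.

Lemma ordered_pair_eq n (a1 a2 b1 b2 : 'I_n) : (a1 < a2)%N -> (b1 < b2)%N ->
  a1 \in [:: b1; b2] -> a2 \in [:: b1; b2] -> b1 \in [:: a1; a2] -> a1 = b1 /\ a2 = b2.
Proof.
move=> lta ltb; rewrite !inE => /pred2P[] e1 /pred2P[] e2 /pred2P[] e3;
  by subst; first [done | lia].
Qed.

Lemma good_pair_corners n (T1 T2 : tblock n) : good_pair (T1, T2) ->
  [/\ ti1 T1 = ti1 T2, ti2 T1 = ti2 T2, tj1 T1 = tj1 T2 & tj2 T1 = tj2 T2].
Proof.
case/and4P=> /= /and3P[lti1 ltj1 _] /and3P[lti2 ltj2 _] _ /eqP occ.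
have /andP[i11 j11] : (ti1 T1 \in [:: ti1 T2; ti2 T2]) && (tj1 T1 \in [:: tj1 T2; tj2 T2]).
  by apply: occupies_coords; rewrite -occ !inE eqxx.
have /andP[i12 j12] : (ti2 T1 \in [:: ti1 T2; ti2 T2]) && (tj2 T1 \in [:: tj1 T2; tj2 T2]).
  by apply: occupies_coords; rewrite -occ !inE eqxx !orbT.
have /andP[i21 j21] : (ti1 T2 \in [:: ti1 T1; ti2 T1]) && (tj1 T2 \in [:: tj1 T1; tj2 T1]).
  by apply: occupies_coords; rewrite occ !inE eqxx.
have [-> ->] := ordered_pair_eq lti1 lti2 i11 i12 i21.
by have [-> ->] := ordered_pair_eq ltj1 ltj2 j11 j12 j21.
Qed.

Lemma Lmx_good_pair n (p : tblock n * tblock n) i j : good_pair p ->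
  Lmx (fun a b c => tmx p.1 a b c + tmx p.2 a b c) i j = 0.
Proof.
case: p => T1 T2 gp; have /and4P[/= v1 v2 /eqP opp _] := gp.
rewrite /Lmx; under eq_bigr do rewrite mulrDr; rewrite big_split /=.
change (Lmx (tmx T1) i j + Lmx (tmx T2) i j = 0).
rewrite !Lmx_tmx // opp; have [-> -> -> ->] := good_pair_corners gp.
by rewrite opprK mulNr addrN.
Qed.

Definition tpair_span n (F : hmx n) := exists ps : seq (tblock n * tblock n),
  all (@good_pair n) ps /\
  forall i j k, F i j k = \sum_(p <- ps) (tmx p.1 i j k + tmx p.2 i j k).

Lemma Lmx_tpair_span n (F : hmx n) i j : tpair_span F -> Lmx F i j = 0.
Proof.
case=> ps [gps eF]; rewrite /Lmx.
under eq_bigr do rewrite eF mulr_sumr.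
rewrite exchange_big; elim: ps {eF} gps => [|p ps IH]; rewrite ?big_nil ?big_cons //.
by case/andP=> gp /IH ->; rewrite Monoid.mulm1; apply: Lmx_good_pair.
Qed.

Lemma LmxB n (A B : hmx n) i j :
  Lmx (fun a b c => A a b c - B a b c) i j = Lmx A i j - Lmx B i j.
Proof. by rewrite /Lmx -sumrB; apply: eq_bigr => k _; rewrite mulrBr. Qed.

Lemma tpair_span_ext n (F G : hmx n) :
  (forall i j k, F i j k = G i j k) -> tpair_span F -> tpair_span G.
Proof. by move=> eFG [ps [gps eF]]; exists ps; split=> // i j k; rewrite -eFG. Qed.

Lemma tpair_span0 n (F : hmx n) : (forall i j k, F i j k = 0) -> tpair_span F.
Proof. by move=> F0; exists [::]; split=> // i j k; rewrite big_nil. Qed.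

Lemma tpair_spanD n (F G : hmx n) :
  tpair_span F -> tpair_span G -> tpair_span (fun i j k => F i j k + G i j k).
Proof.
move=> [ps [gps eF]] [qs [gqs eG]]; exists (ps ++ qs).
by split=> [|i j k]; rewrite ?all_cat ?gps // big_cat /= eF eG.
Qed.

Definition tblock_opp n (T : tblock n) :=
  TBlock (~~ tsign T) (ti1 T) (tj1 T) (tk1 T) (ti2 T) (tj2 T) (tk2 T).

Lemma tmx_opp n (T : tblock n) i j k : tmx (tblock_opp T) i j k = - tmx T i j k.
Proof. by rewrite /tmx /=; case: (tsign T); rewrite ?mulN1r ?mul1r ?opprK. Qed.

Lemma depth_opp n (T : tblock n) : depth (tblock_opp T) = - depth T.
Proof. by rewrite /depth /=; case: (tsign T); rewrite //= opprB. Qed.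

Lemma tpair_spanN n (F : hmx n) : tpair_span F -> tpair_span (fun i j k => - F i j k).
Proof.
move=> [ps [gps eF]]; exists [seq (tblock_opp p.1, tblock_opp p.2) | p <- ps]; split.
  rewrite all_map; apply: sub_all gps => -[T1 T2] /and4P[v1 v2 opp occ].
  by apply/and4P; split=> //=; rewrite /opposite_depth !depth_opp (eqP opp).
by move=> i j k; rewrite big_map eF -sumrN; apply: eq_bigr => p _; rewrite !tmx_opp opprD.
Qed.

Lemma tpair_spanZ n (F : hmx n) (c : int) :
  tpair_span F -> tpair_span (fun i j k => c * F i j k).
Proof.
move=> spF; have spZn (m : nat) : tpair_span (fun i j k => m%:Z * F i j k).
  elim: m => [|m IH]; first by apply: tpair_span0 => i j k; rewrite mul0r.
  by apply: tpair_span_ext (tpair_spanD spF IH) => i j k; rewrite intS mulrDl mul1r.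
case: c => m; first exact: spZn.
by apply: tpair_span_ext (tpair_spanN (spZn m.+1)) => i j k; rewrite NegzE mulNr.
Qed.

Lemma tpair_span_sum n (I : Type) (r : seq I) (F : I -> hmx n) :
  (forall x, tpair_span (F x)) -> tpair_span (fun a b c => \sum_(x <- r) F x a b c).
Proof.
move=> spF; elim: r => [|x r IH]; first by apply: tpair_span0 => a b c; rewrite big_nil.
by apply: tpair_span_ext (tpair_spanD (spF x) IH) => a b c; rewrite big_cons.
Qed.

Lemma tpair_span_pair n (i1 i2 j1 j2 k1 k2 l1 l2 : 'I_n) :
  (i1 < i2)%N -> (j1 < j2)%N -> (k1 < k2)%N -> (l1 < l2)%N -> (k2 - k1 = l2 - l1)%N ->
  tpair_span (fun a b c =>
    sdelta a i1 i2 * sdelta b j1 j2 * (sdelta c k1 k2 - sdelta c l1 l2)).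
Proof.
move=> lti ltj ltk ltl same_depth.
have vT : tblock_valid (TBlock true i1 j1 k1 i2 j2 k2) by apply/and3P.
have vT' : tblock_valid (TBlock false i1 j1 l1 i2 j2 l2) by apply/and3P.
exists [:: (TBlock true i1 j1 k1 i2 j2 k2, TBlock false i1 j1 l1 i2 j2 l2)]; split.
  rewrite /= andbT /good_pair vT vT' eqxx andbT /opposite_depth /depth /=.
  by apply/eqP; lia.
by move=> a b c; rewrite big_seq1 /= !tmx_sdelta //=; ring.
Qed.

Definition kervec (m x : nat) : int :=
  ind (x == m)%N - m%:Z * ind (x == 1)%N + (m%:Z - 1) * ind (x == 0)%N.

Lemma kervec_expansion n (v : 'I_n -> int) (x : 'I_n) :
  \sum_(m < n) v m = 0 -> \sum_(m < n) m%:Z * v m = 0 ->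
  \sum_(m < n) v m * kervec m x = v x.
Proof.
move=> sum0 moment0.
rewrite (eq_bigr (fun m : 'I_n => v m * ind (m == x) - (m%:Z * v m) * ind (x == 1 :> nat)
    + (m%:Z * v m - v m) * ind (x == 0 :> nat))); last first.
  by move=> m _; rewrite /kervec val_eqE eq_sym; ring.
by rewrite !big_split sumrN /= -!mulr_suml sumrB sum0 moment0 sum_mul_ind; ring.
Qed.

Lemma zero_margins_expansion (I : finType) (X : I -> I -> int) (r a b : I) :
  (forall i, \sum_j X i j = 0) -> (forall j, \sum_i X i j = 0) ->
  \sum_i \sum_j X i j * (sdelta a i r * sdelta b j r) = X a b.
Proof.
move=> rows cols; transitivity (\sum_i X i b * sdelta a i r).
  apply: eq_bigr => i _.
  rewrite (eq_bigr (fun j => (X i j * sdelta b j r) * sdelta a i r)) => [|j _].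
    by rewrite -mulr_suml sum_mul_sdelta_pivot rows mulr0 subr0.
  by rewrite mulrCA mulrC.
by rewrite sum_mul_sdelta_pivot cols mulr0 subr0.
Qed.

Lemma sdelta_inord n (c : 'I_n.+1) (m1 m2 : nat) : (m1 <= n)%N -> (m2 <= n)%N ->
  sdelta c (inord m1) (inord m2) = sdelta (c : nat) m1 m2.
Proof. by move=> le1 le2; rewrite /sdelta -!val_eqE /= !inordK. Qed.

Lemma kervecS (m x : nat) :
  kervec m.+2 x = kervec m.+1 x + (sdelta x 0%N m.+1 - sdelta x 1%N m.+2).
Proof. by rewrite /kervec /sdelta !intS; ring. Qed.

Lemma tpair_span_kervec n (i1 i2 j1 j2 : 'I_n.+1) (m : nat) :
  (i1 <= i2)%N -> (j1 <= j2)%N -> (m <= n)%N ->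
  tpair_span (fun a b c => sdelta a i1 i2 * sdelta b j1 j2 * kervec m c).
Proof.
rewrite leq_eqVlt => /orP[/eqP/val_inj-> _ _|lti].
  by apply: tpair_span0 => a b c; rewrite sdelta_id !mul0r.
rewrite leq_eqVlt => /orP[/eqP/val_inj-> _|ltj].
  by apply: tpair_span0 => a b c; rewrite sdelta_id mulr0 mul0r.
elim: m => [|[|m] IH] lemn.
- by apply: tpair_span0 => a b c; rewrite /kervec; ring.
- by apply: tpair_span0 => a b c; rewrite /kervec; ring.
have sp : tpair_span (fun a b c => sdelta a i1 i2 * sdelta b j1 j2 *
    (sdelta c (inord 0) (inord m.+1) - sdelta c (inord 1) (inord m.+2))).
  by apply: tpair_span_pair; rewrite ?inordK //; lia.
apply: tpair_span_ext (tpair_spanD (IH (ltnW lemn)) sp) => a b c.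
by rewrite kervecS !sdelta_inord; [ring | lia ..].
Qed.

Lemma tpair_span_zero_margins n (D : hmx n.+1) :
  (forall j k, \sum_i D i j k = 0) -> (forall i k, \sum_j D i j k = 0) ->
  (forall i j, \sum_k D i j k = 0) -> (forall i j, Lmx D i j = 0) -> tpair_span D.
Proof.
move=> rows cols verts L0.
have moment0 i j : \sum_(k < n.+1) k%:Z * D i j k = 0.
  have := L0 i j; rewrite /Lmx; under eq_bigr do rewrite intS mulrDl mul1r.
  by rewrite big_split /= verts add0r.
apply: (@tpair_span_ext _ (fun a b c => \sum_i \sum_j \sum_(m < n.+1)
    D i j m * (sdelta a i ord_max * sdelta b j ord_max * kervec m c))).
  move=> a b c; rewrite -(zero_margins_expansion ord_max a b (cols^~ c) (rows^~ c)).
  apply: eq_bigr => i _; apply: eq_bigr => j _.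
  by under eq_bigr do rewrite mulrCA; rewrite -mulr_sumr kervec_expansion // mulrC.
do 3 apply: tpair_span_sum => ?.
by apply: tpair_spanZ; apply: tpair_span_kervec; rewrite ?leq_ord.
Qed.

Lemma sum_alternating_signs (N : nat) :
  \sum_(x <- mkseq (fun m => (-1) ^+ m) N) x = (odd N)%:Z :> int.
Proof.
rewrite /mkseq big_map -(subn0 N) -/(index_iota 0 N) big_mkord subn0.
elim: N => [|N IH]; first by rewrite big_ord0.
by rewrite big_ord_recr /= IH -signr_odd; case: (odd N); rewrite ?expr0 ?expr1.
Qed.

Lemma alt_sign_line_sum (s : seq int) : alt_sign_line s -> \sum_(x <- s) x = 1.
Proof.
case/andP=> /eqP alt odd_size.
rewrite (bigID (fun x => x != 0)) /= [X in _ + X]big1 => [|x /negPn/eqP //].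
by rewrite addr0 -big_filter alt sum_alternating_signs odd_size.
Qed.

Lemma ashm_line_sums n (A : hmx n) : is_ASHM A ->
  [/\ forall j k, \sum_i A i j k = 1, forall i k, \sum_j A i j k = 1
    & forall i j, \sum_k A i j k = 1].
Proof.
case=> _ [rows [cols verts]].
have line_sum (f : 'I_n -> int) : alt_sign_line [seq f i | i <- enum 'I_n] -> \sum_i f i = 1.
  by move/alt_sign_line_sum; rewrite big_map enumT.
by split=> *; apply: line_sum; [apply: rows | apply: cols | apply: verts].
Qed.

Theorem theorem2p8 (n : nat) (A B : hmx n) :
  is_ASHM A -> is_ASHM B ->
  ((forall i j : 'I_n, Lmx A i j = Lmx B i j) <->
   exists ps : seq (tblock n * tblock n),
     all (@good_pair n) ps /\
     forall i j k : 'I_n,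
       A i j k - B i j k = \sum_(p <- ps) (tmx p.1 i j k + tmx p.2 i j k)).
Proof.
move=> ashmA ashmB; split=> [eqL|spD i j]; last first.
  by apply/eqP; rewrite -subr_eq0 -LmxB (Lmx_tpair_span _ _ spD).
case: n A B ashmA ashmB eqL => [|n] A B ashmA ashmB eqL.
  by exists [::]; split=> // [[]].
have [rowsA colsA vertsA] := ashm_line_sums ashmA.
have [rowsB colsB vertsB] := ashm_line_sums ashmB.
apply: tpair_span_zero_margins => [j k|i k|i j|i j]; rewrite ?sumrB.
- by rewrite rowsA rowsB subrr.
- by rewrite colsA colsB subrr.
- by rewrite vertsA vertsB subrr.
- by rewrite LmxB eqL subrr.
Qed.
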